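(* In $\mathrm{TSym}$, for every planar tree $t$ of positive degree, $$\Delta_+(M_t)=\sum_{i\in\mathrm{GD}(t)}M_{{}^it}\otimes M_{t^i}.$$
   Context: A planar tree has linearly ordered children at each node, each node being a leaf or having $\ge2$ children (internal node); $\deg t$ = number of leaves minus one, $\mathrm{ideg}(t)$ = number of internal nodes, leaves numbered left to right. For $0\le i\le\deg t$, with $P$ the path from the root to leaf $i+1$: ${}^it$ is obtained by deleting, at each internal node on $P$, the children strictly to the right of the child on $P$ (with their subtrees), then contracting nodes with exactly one child; $t^i$ likewise with the children strictly to the left. The splitting is allowable if $\mathrm{ideg}({}^it)+\mathrm{ideg}(t^i)=\mathrm{ideg}(t)$. $\mathrm{TSym}$ has basis $\{F_t\}$ over planar trees and coproduct $\Delta(F_t)=\sum F_{{}^it}\otimes F_{t^i}$ over $0\le i\le\deg t$ with allowable splitting; $\Delta_+(x)=\Delta(x)-x\otimes1-1\otimes x$ with $1$ the one-leaf tree. $s/r$ identifies the root of $s$ with the leftmost leaf of $r$; $\mathrm{GD}(t)=\{i\in\{1,\dots,\deg t-1\}: t=s/r \text{ for some } s,r,\ \deg s=i\}$. Planar Tamari order: if an internal node $x$ has children $c_1,\dots,c_{a-1},y$ ($a\ge2$) with $y$ internal having children $d_1,\dots,d_{b+1}$ ($b\ge1$), the left rotation at $x$ replaces the subtree at $x$ by a node with children $z,d_2,\dots,d_{b+1}$, where $z$ is a new node with children $c_1,\dots,c_{a-1},d_1$; $\le_{PT}$ is the reflexive–transitive closure of ''$t$ is a left rotation of $s$''. The monomial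 basis is defined by $F_s=\sum_{t\ge_{PT}s}M_t$. *)

From Stdlib Require Import Relations ClassicalDescription.
From HB Require Import structures.
From mathcomp Require Import all_boot all_order all_algebra.
Set Implicit Arguments. Unset Strict Implicit. Unset Printing Implicit Defensive.
Import GRing.Theory.
Local Open Scope ring_scope.

Inductive ptree : Type := Leaf | Node of seq ptree.

Fixpoint enc (t : ptree) : GenTree.tree unit :=
  match t with
  | Leaf => GenTree.Leaf tt
  | Node cs => GenTree.Node 0 (map enc cs)
  end.

Fixpoint dec (g : GenTree.tree unit) : ptree :=
  match g with
  | GenTree.Leaf _ => Leaf
  | GenTree.Node _ gs => Node (map dec gs)
  end.

Lemma encK : cancel enc dec.
Proof.
rewrite /cancel; fix IH 1; case=> [|cs] //=; congr Node.
elim: cs => [|c cs IHcs] //=; by rewrite IH IHcs.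
Qed.

HB.instance Definition _ := Countable.copy ptree (can_type encK).

Fixpoint valid (t : ptree) : bool :=
  match t with
  | Leaf => true
  | Node cs => (2 <= size cs)%N && all valid cs
  end.

Fixpoint nleaves (t : ptree) : nat :=
  match t with
  | Leaf => 1%N
  | Node cs => sumn (map nleaves cs)
  end.

Definition deg (t : ptree) : nat := (nleaves t).-1.

Fixpoint ideg (t : ptree) : nat :=
  match t with
  | Leaf => 0%N
  | Node cs => (sumn (map ideg cs)).+1
  end.

(* Splittings.  [lcut t i] = ^i t and [rcut t i] = t^i, where the path *)
(* goes to leaf i+1 (leaves numbered 1,2,... from the left), i.e. leaf  *)
(* number i counted from 0.  A node left with one child is contracted. *)

Fixpoint lcut (t : ptree) (i : nat) : ptree :=
  match t with
  | Leaf => Leaf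
  | Node cs =>
    let fix go (cs : seq ptree) (i : nat) (acc : seq ptree) : seq ptree :=
      match cs with
      | [::] => acc
      | c :: cs' => if (i < nleaves c)%N then rcons acc (lcut c i)
                    else go cs' (i - nleaves c)%N (rcons acc c)
      end in
    match go cs i [::] with
    | [:: c] => c
    | l => Node l
    end
  end.

Fixpoint rcut (t : ptree) (i : nat) : ptree :=
  match t with
  | Leaf => Leaf
  | Node cs =>
    let fix go (cs : seq ptree) (i : nat) : seq ptree :=
      match cs with
      | [::] => [::]
      | c :: cs' => if (i < nleaves c)%N then rcut c i :: cs'
                    else go cs' (i - nleaves c)%N
      end in
    match go cs i with
    | [:: c] => c
    | l => Node l
    end
  end.

Definition allowable (t : ptree) (i : nat) : bool :=
  (ideg (lcut t i) + ideg (rcut t i) == ideg t)%N.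

Fixpoint graft (s r : ptree) : ptree :=
  match r with
  | Leaf => s
  | Node [::] => Node [::]
  | Node (c :: cs) => Node (graft s c :: cs)
  end.

Definition GD (t : ptree) (i : nat) : Prop :=
  (1 <= i <= (deg t).-1)%N /\
  exists s r, [/\ valid s, valid r, t = graft s r & deg s = i].

Definition pbool (P : Prop) : bool :=
  if excluded_middle_informative P then true else false.

Inductive lrot : ptree -> ptree -> Prop :=
| lrot_here (cs : seq ptree) (d1 : ptree) (ds : seq ptree) :
    cs <> [::] -> ds <> [::] ->
    lrot (Node (rcons cs (Node (d1 :: ds)))) (Node (Node (rcons cs d1) :: ds))
| lrot_in (l r : seq ptree) (c c' : ptree) :
    lrot c c' -> lrot (Node (l ++ c :: r)) (Node (l ++ c' :: r)).

Definition le_PT (s t : ptree) : Prop := clos_refl_trans ptree lrot s t.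

Fixpoint treesF (fuel n : nat) : seq ptree :=
  match fuel with
  | 0 => [::]
  | f.+1 =>
    if n == 1%N then [:: Leaf] else
    let fix forests (g m : nat) : seq (seq ptree) :=
      match g with
      | 0 => if m == 0%N then [:: [::]] else [::]
      | g'.+1 =>
        if m == 0%N then [:: [::]] else
        flatten [seq [seq t :: fo | t <- treesF f k, fo <- forests g' (m - k)%N]
                | k <- iota 1 m]
      end in
    [seq Node fo | fo <- forests n n & (2 <= size fo)%N]
  end.

Definition trees (n : nat) : seq ptree := treesF n n.

(* TSym: an element is a finite formal combination of the F_t, given  *)
(* as a list of (coefficient, tree); its value is its coefficient     *)
(* function.  Likewise for TSym (x) TSym on pairs of trees.           *)

Section TSym.
Variable K : fieldType.

Definition elt := seq (K * ptree).
Definition elt2 := seq (K * (ptree * ptree)).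

Definition coef (x : elt) (u : ptree) : K :=
  \sum_(p <- x) (p.2 == u)%:R * p.1.
Definition coef2 (x : elt2) (u : ptree * ptree) : K :=
  \sum_(p <- x) (p.2 == u)%:R * p.1.

Definition tens (x y : elt) : elt2 :=
  [seq (p.1 * q.1, (p.2, q.2)) | p <- x, q <- y].

Definition DeltaF (t : ptree) : elt2 :=
  [seq (1, (lcut t i, rcut t i)) | i <- iota 0 (deg t).+1 & allowable t i].

Definition Delta (x : elt) : elt2 :=
  flatten [seq [seq (p.1 * q.1, q.2) | q <- DeltaF p.2] | p <- x].

(* coefficients of Delta_+(x) = Delta(x) - x (x) 1 - 1 (x) x, 1 = F_Leaf *)
Definition coefDeltaPlus (x : elt) (u : ptree * ptree) : K :=
  coef2 (Delta x) u - coef x u.1 * (u.2 == Leaf)%:R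
                    - (u.1 == Leaf)%:R * coef x u.2.

(* Monomial basis: F_s = sum_{t >=_PT s} M_t, i.e.
   M_s = F_s - sum_{t >_PT s} M_t  (recursion on the finite upset). *)
Definition upset_strict (s : ptree) : seq ptree :=
  [seq t <- trees (nleaves s) | pbool (le_PT s t) && (t != s)].

Fixpoint Mrec (fuel : nat) (s : ptree) : elt :=
  match fuel with
  | 0 => [::]
  | f.+1 => (1, s) :: [seq (- p.1, p.2) | p <- flatten [seq Mrec f t | t <- upset_strict s]]
  end.

Definition M (s : ptree) : elt := Mrec (size (trees (nleaves s))).+1 s.

End TSym.

From Stdlib Require Import Relations ClassicalDescription.
From mathcomp Require Import all_boot all_order all_algebra zify.
Set Implicit Arguments. Unset Strict Implicit. Unset Printing Implicit Defensive.
Import GRing.Theory.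

(* Fix a position i.  A tree t' above t in the planar Tamari order is a graft
   s/r with deg s = i exactly when the splitting of t at i is allowable,
   [lcut t i] <= s and [rcut t i] <= r; and cutting s/r at i gives back
   (s, r).  The first fact holds because a left rotation can only make a
   splitting allowable and moves its two cuts up, the converse because
   grafting is monotone and t <= [lcut t i]/[rcut t i] for allowable i.
   Writing F_s = \sum_(t >= s) M_t this gives
     Delta F_t = \sum_(t' >= t) \sum_(i : t' = s/r, deg s = i)
                   M_[lcut t' i] (x) M_[rcut t' i],
   so by Moebius inversion over the Tamari order (well founded, since left
   rotations decrease a potential) Delta M_t is the sum of the terms with
   t' = t.  Those with i = 0 and i = deg t are 1 (x) M_t and M_t (x) 1. *)

Lemma mem_cat_mid (T : eqType) (l r : seq T) x : x \in l ++ x :: r.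
Proof. by rewrite mem_cat mem_head orbT. Qed.

Lemma ptree_ind_mem (P : ptree -> Prop) :
  P Leaf -> (forall cs, (forall c, c \in cs -> P c) -> P (Node cs)) ->
  forall t, P t.
Proof.
move=> hLeaf hNode; fix IH 1; case=> [|cs]; first exact: hLeaf.
apply: hNode; elim: cs => [|c cs IHcs] x; first by move=> hx; discriminate hx.
rewrite inE => /orP[/eqP->|/IHcs hx]; [exact: IH | exact: hx].
Qed.

Definition nleavesF (l : seq ptree) := sumn (map nleaves l).
Definition idegF (l : seq ptree) := sumn (map ideg l).

Lemma nleaves_Node cs : nleaves (Node cs) = nleavesF cs. Proof. by []. Qed.
Lemma ideg_Node cs : ideg (Node cs) = (idegF cs).+1. Proof. by []. Qed.
Lemma valid_Node cs : valid (Node cs) = (2 <= size cs) && all valid cs.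
Proof. by []. Qed.

Lemma nleavesF_cons c l : nleavesF (c :: l) = nleaves c + nleavesF l.
Proof. by []. Qed.
Lemma idegF_cons c l : idegF (c :: l) = ideg c + idegF l. Proof. by []. Qed.
Lemma nleavesF_cat l r : nleavesF (l ++ r) = nleavesF l + nleavesF r.
Proof. by rewrite /nleavesF map_cat sumn_cat. Qed.
Lemma idegF_cat l r : idegF (l ++ r) = idegF l + idegF r.
Proof. by rewrite /idegF map_cat sumn_cat. Qed.
Lemma nleavesF_rcons l c : nleavesF (rcons l c) = nleavesF l + nleaves c.
Proof. by rewrite -cats1 nleavesF_cat /nleavesF /= addn0. Qed.
Lemma idegF_rcons l c : idegF (rcons l c) = idegF l + ideg c.
Proof. by rewrite -cats1 idegF_cat /idegF /= addn0. Qed.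

Lemma nleaves_gt0 t : valid t -> 0 < nleaves t.
Proof.
elim/ptree_ind_mem: t => // [[|c cs]] // IH /andP[_ /andP[hc _]].
by have := IH c (mem_head _ _) hc; rewrite nleaves_Node nleavesF_cons; lia.
Qed.

Lemma size_le_nleavesF l : all valid l -> size l <= nleavesF l.
Proof.
elim: l => //= c l IH /andP[hc hl]; rewrite nleavesF_cons.
by have := nleaves_gt0 hc; have := IH hl; lia.
Qed.

Lemma valid_Node_cat l c r : valid (Node (l ++ c :: r)) ->
  [/\ all valid l, valid c, all valid r & 1 <= size l + size r].
Proof.
by rewrite valid_Node all_cat /= size_cat /= => /andP[hs /and3P[-> -> ->]]; split; lia.
Qed.

Lemma nleavesF_split cs i : i < nleavesF cs ->
  exists l c r j, [/\ cs = l ++ c :: r, i = nleavesF l + j & j < nleaves c].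
Proof.
elim: cs i => [|c cs IH] i //; rewrite nleavesF_cons => hi.
case: (ltnP i (nleaves c)) => h; first by exists [::], c, cs, i.
have [|l [c' [r [j [-> ei hj]]]]] := IH (i - nleaves c); first lia.
by exists (c :: l), c', r, j; split => //; rewrite nleavesF_cons; lia.
Qed.

(** * Cutting a tree *)

(* The forest-level loops inside the definitions of [lcut] and [rcut]. *)
Fixpoint lcutF (cs : seq ptree) (i : nat) (acc : seq ptree) : seq ptree :=
  match cs with
  | [::] => acc
  | c :: cs' => if i < nleaves c then rcons acc (lcut c i)
                else lcutF cs' (i - nleaves c) (rcons acc c)
  end.

Fixpoint rcutF (cs : seq ptree) (i : nat) : seq ptree :=
  match cs with
  | [::] => [::]
  | c :: cs' => if i < nleaves c then rcut c i :: cs' else rcutF cs' (i - nleaves c)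
  end.

(* The same three-way match as in [lcut] and [rcut], so that [lcut_NodeE] and
   [rcut_NodeE] hold by conversion. *)
Definition contract (l : seq ptree) : ptree :=
  match l with
  | [::] => Node [::]
  | [:: c] => c
  | [:: c, p & l1] => Node [:: c, p & l1]
  end.

Lemma contract_Node l : 2 <= size l -> contract l = Node l.
Proof. by case: l => [|a [|b l]]. Qed.

Lemma nleaves_contract l : l != [::] -> nleaves (contract l) = nleavesF l.
Proof. by case: l => [|a [|b l]] //= _; rewrite /nleavesF /= addn0. Qed.

Lemma valid_contract l : l != [::] -> all valid l -> valid (contract l).
Proof. by case: l => [|a [|b l]] //= _; rewrite andbT. Qed.

Lemma ideg_contract l :
  ideg (contract l) = if size l == 1 then idegF l else (idegF l).+1.
Proof. by case: l => [|a [|b l]] //=; rewrite /idegF /= addn0. Qed.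

Lemma lcutF_cat l c r j acc : j < nleaves c ->
  lcutF (l ++ c :: r) (nleavesF l + j) acc = rcons (acc ++ l) (lcut c j).
Proof.
move=> hj; elim: l acc => [|x l IH] acc /=; first by rewrite hj cats0.
rewrite nleavesF_cons ifN; last lia.
by rewrite (_ : _ - _ = nleavesF l + j) ?IH ?cat_rcons //; lia.
Qed.

Lemma rcutF_cat l c r j : j < nleaves c ->
  rcutF (l ++ c :: r) (nleavesF l + j) = rcut c j :: r.
Proof.
move=> hj; elim: l => [|x l IH] /=; first by rewrite hj.
rewrite nleavesF_cons ifN; last lia.
by rewrite (_ : _ - _ = nleavesF l + j) ?IH //; lia.
Qed.

Lemma lcut_NodeE cs i : lcut (Node cs) i = contract (lcutF cs i [::]).
Proof. by []. Qed.

Lemma rcut_NodeE cs i : rcut (Node cs) i = contract (rcutF cs i).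
Proof. by []. Qed.

Lemma lcut_Node_cat l c r j : j < nleaves c ->
  lcut (Node (l ++ c :: r)) (nleavesF l + j) = contract (rcons l (lcut c j)).
Proof. by move=> hj; rewrite lcut_NodeE lcutF_cat. Qed.

Lemma rcut_Node_cat l c r j : j < nleaves c ->
  rcut (Node (l ++ c :: r)) (nleavesF l + j) = contract (rcut c j :: r).
Proof. by move=> hj; rewrite rcut_NodeE rcutF_cat. Qed.

Lemma lcut_Node_cons c r j : j < nleaves c -> lcut (Node (c :: r)) j = lcut c j.
Proof. exact: (@lcut_Node_cat [::]). Qed.

Lemma rcut_Node_cons c r j : j < nleaves c ->
  rcut (Node (c :: r)) j = contract (rcut c j :: r).
Proof. exact: (@rcut_Node_cat [::]). Qed.

Lemma cuts_spec t i : valid t -> i < nleaves t ->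
  [/\ valid (lcut t i), nleaves (lcut t i) = i.+1,
      valid (rcut t i), nleaves (rcut t i) = nleaves t - i
    & ideg t <= ideg (lcut t i) + ideg (rcut t i)].
Proof.
elim/ptree_ind_mem: t i => [|cs IH] i; first by move=> _; case: i.
move=> hv hi; have [l [c [r [j [ecs -> hj]]]]] := nleavesF_split hi; subst cs.
have [hl hc hr hs] := valid_Node_cat hv.
have [lv ln rv rn hd] := IH c (mem_cat_mid l r c) j hc hj.
have nn x : rcons l x != [::] by rewrite -size_eq0 size_rcons.
rewrite lcut_Node_cat // rcut_Node_cat //; split.
- by rewrite valid_contract ?all_rcons ?hl ?lv.
- by rewrite nleaves_contract // nleavesF_rcons ln; lia.
- by rewrite valid_contract //= rv.
- rewrite nleaves_contract // nleavesF_cons rn nleaves_Node nleavesF_cat nleavesF_cons.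
  by have := nleaves_gt0 hc; lia.
- rewrite !ideg_contract size_rcons idegF_rcons idegF_cons ideg_Node idegF_cat idegF_cons.
  by clear IH; case: l {hl hv hi nn} hs => [|a l]; case: r {hr} => [|b r] /=; lia.
Qed.

(* A splitting is allowable iff the path to the leaf always goes through the
   first or the last child: at every node exactly one of the two cuts is
   contracted. *)
Lemma allowable_Node_cat l c r j : valid (Node (l ++ c :: r)) -> j < nleaves c ->
  allowable (Node (l ++ c :: r)) (nleavesF l + j)
  = allowable c j && ((l == [::]) || (r == [::])).
Proof.
move=> hv hj; have [_ hc _ hs] := valid_Node_cat hv.
have [_ _ _ _ hle] := cuts_spec hc hj.
rewrite /allowable lcut_Node_cat // rcut_Node_cat // !ideg_contract size_rcons.
rewrite idegF_rcons idegF_cons ideg_Node idegF_cat idegF_cons.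
case: l hs {hv} => [|a l]; case: r => [|b r] /= hs; rewrite ?orbT ?andbT ?andbF.
all: try by apply/eqP/eqP; lia.
all: by apply/negbTE/eqP; lia.
Qed.

Lemma allowable_Node_cons c r j : valid (Node (c :: r)) -> j < nleaves c ->
  allowable (Node (c :: r)) j = allowable c j.
Proof. by move=> hv hj; rewrite (@allowable_Node_cat [::]) // andbT. Qed.

(** * Grafting *)

Lemma mem_rcons_last (T : eqType) (l : seq T) x : x \in rcons l x.
Proof. by rewrite mem_rcons mem_head. Qed.

Lemma graft_Leaf_l r : graft Leaf r = r.
Proof.
by elim/ptree_ind_mem: r => // [[|c cs]] IH //=; rewrite IH ?mem_head.
Qed.

Lemma graft_spec s r : valid s -> valid r ->
  [/\ valid (graft s r), nleaves (graft s r) = nleaves s + nleaves r - 1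
    & ideg (graft s r) = ideg s + ideg r].
Proof.
move=> hs; elim/ptree_ind_mem: r => [|[|c cs] IH] hr //; first by split => //=; lia.
move: (hr) => /= /andP[hsz /andP[hc hcs]].
have [v n d] := IH c (mem_head _ _) hc.
split => /=; first by rewrite hsz v hcs.
- by rewrite n; have := nleaves_gt0 hc; have := nleaves_gt0 hs; lia.
- by rewrite d; lia.
Qed.

Lemma cuts_deg t : valid t -> lcut t (deg t) = t /\ rcut t (deg t) = Leaf.
Proof.
elim/ptree_ind_mem: t => // cs IH hv.
case/lastP: cs IH hv => [//|l c] IH hv.
have hv' : valid (Node (l ++ [:: c])) by rewrite cats1.
have [_ hc _ hs] := valid_Node_cat hv'.
have [el er] := IH c (mem_rcons_last l c) hc.
have hc0 := nleaves_gt0 hc.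
have -> : deg (Node (rcons l c)) = nleavesF l + deg c.
  by rewrite /deg nleaves_Node nleavesF_rcons; lia.
rewrite -cats1 lcut_Node_cat ?rcut_Node_cat /deg; try lia.
rewrite -/(deg c) el er contract_Node ?cats1 // size_rcons.
by move: hs => /=; lia.
Qed.

Lemma cuts_graft s r : valid s -> valid r ->
  lcut (graft s r) (deg s) = s /\ rcut (graft s r) (deg s) = r.
Proof.
move=> hs; elim/ptree_ind_mem: r => [|[|c cs] IH] hr //; first exact: cuts_deg.
have /andP[hsz /andP[hc _]] := hr.
have [_ n _] := graft_spec hs hc.
have hj : deg s < nleaves (graft s c).
  by rewrite n /deg; have := nleaves_gt0 hc; have := nleaves_gt0 hs; lia.
have [el er] := IH c (mem_head _ _) hc.
change (graft s (Node (c :: cs))) with (Node (graft s c :: cs)).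
by rewrite lcut_Node_cons ?rcut_Node_cons ?el ?er ?contract_Node.
Qed.

(** * The planar Tamari order *)

Lemma lrot_spec s t : lrot s t ->
  [/\ nleaves t = nleaves s, ideg t = ideg s & valid s -> valid t].
Proof.
elim=> {s t} [cs d1 ds hcs hds | l r c c' _ [n d v]].
- rewrite !(nleaves_Node, ideg_Node, nleavesF_cons, idegF_cons, nleavesF_rcons, idegF_rcons).
  split; try lia.
  rewrite !valid_Node /= !all_rcons /= size_rcons.
  case/and3P=> _ /and3P[-> -> ->] ->; rewrite size_rcons.
  by case: cs hcs.
- rewrite !nleaves_Node !ideg_Node !nleavesF_cat !idegF_cat !nleavesF_cons !idegF_cons n d.
  split=> //; rewrite !valid_Node !size_cat /= !all_cat /=.
  by case/andP=> -> /and3P[-> /v -> ->].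
Qed.

Lemma le_PT_spec s t : le_PT s t ->
  [/\ nleaves t = nleaves s, ideg t = ideg s & valid s -> valid t].
Proof.
elim=> {s t} [s t /lrot_spec //| s //| s t u _ [n1 d1 v1] _ [n2 d2 v2]].
by split; [rewrite n2 | rewrite d2 | move=> /v1 /v2].
Qed.

Lemma le_PT_homo (f : ptree -> ptree) :
  (forall s t, lrot s t -> le_PT (f s) (f t)) ->
  forall s t, le_PT s t -> le_PT (f s) (f t).
Proof.
move=> hf s t; elim=> {s t} [s t /hf //|s|s t u _ h1 _ h2]; first exact: rt_refl.
exact: rt_trans h1 h2.
Qed.

Lemma le_PT_Node_cat l r c c' :
  le_PT c c' -> le_PT (Node (l ++ c :: r)) (Node (l ++ c' :: r)).
Proof.
apply: (@le_PT_homo (fun x => Node (l ++ x :: r))) => x y h.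
exact/rt_step/lrot_in.
Qed.

Lemma le_PT_Node_rcons l c c' :
  le_PT c c' -> le_PT (Node (rcons l c)) (Node (rcons l c')).
Proof. by rewrite -!cats1; apply: le_PT_Node_cat. Qed.

Lemma le_PT_Node_cons r c c' : le_PT c c' -> le_PT (Node (c :: r)) (Node (c' :: r)).
Proof. exact: (@le_PT_Node_cat [::]). Qed.

Lemma le_PT_contract_rcons l c c' :
  le_PT c c' -> le_PT (contract (rcons l c)) (contract (rcons l c')).
Proof.
case: l => [//|a l] h.
by rewrite !(@contract_Node (rcons (a :: l) _)) ?size_rcons //; apply: le_PT_Node_rcons.
Qed.

Lemma le_PT_contract_cons r c c' :
  le_PT c c' -> le_PT (contract (c :: r)) (contract (c' :: r)).
Proof.
case: r => [//|a r] h.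
by rewrite !(@contract_Node (_ :: a :: r)) //; apply: le_PT_Node_cons.
Qed.

Lemma le_PT_graftl a a' b : le_PT a a' -> le_PT (graft a b) (graft a' b).
Proof.
apply: (@le_PT_homo (graft^~ b)) => {}a {}a' h; elim/ptree_ind_mem: b => [|[|c cs] IH] /=.
- exact: rt_step.
- exact: rt_refl.
- exact/le_PT_Node_cons/IH/mem_head.
Qed.

Lemma le_PT_graftr a b b' : le_PT b b' -> le_PT (graft a b) (graft a b').
Proof.
apply: (@le_PT_homo (graft a)) => {}b {}b'.
elim=> {b b'} [[//|c cs] d1 ds _ hds | [|c0 l] r c c' h IH] /=.
- exact/rt_step/(@lrot_here (graft a c :: cs)).
- exact: le_PT_Node_cons.
- exact/rt_step/(@lrot_in (graft a c0 :: l)).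
Qed.

(* Rotating repeatedly along the left branch of [y]. *)
Lemma le_PT_rcons_graft l x y : l != [::] -> valid y ->
  le_PT (Node (rcons l (graft x y))) (graft (Node (rcons l x)) y).
Proof.
move=> hl; elim/ptree_ind_mem: y => [|[|d1 ds] IH] hy //; first exact: rt_refl.
move: hy => /= /andP[hds /andP[hd1 _]].
apply: rt_trans (le_PT_Node_cons _ (IH _ (mem_head _ _) hd1)).
by apply/rt_step/lrot_here => e; [rewrite e in hl | rewrite e in hds].
Qed.

Lemma le_PT_graft_cuts t i : valid t -> i < nleaves t -> allowable t i ->
  le_PT t (graft (lcut t i) (rcut t i)).
Proof.
elim/ptree_ind_mem: t i => [|cs IH] i; first by case: i => // _ _ _; exact: rt_refl.
move=> hv hi; have [l [c [r [j [ecs -> hj]]]]] := nleavesF_split hi; subst cs.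
have [_ hc _ hs] := valid_Node_cat hv.
have hle := IH c (mem_cat_mid l r c) j hc hj.
rewrite allowable_Node_cat // lcut_Node_cat // rcut_Node_cat //.
case/andP=> /hle{}hle /orP[/eqP el|/eqP er]; subst.
- by case: r hs {IH hv hi} => [//|r0 r] _ /=; apply: le_PT_Node_cons.
- have hl0 : l != [::] by case: l hs {IH hv hi hle}.
  rewrite (@contract_Node (rcons l _)) ?size_rcons; last by case: l hl0 {IH hv hi hle hs}.
  rewrite [contract [:: _]]/= cats1.
  apply: rt_trans (le_PT_Node_rcons l hle) _.
  by apply: le_PT_rcons_graft => //; have [] := cuts_spec hc hj.
Qed.

Lemma le_PT_graft_of_cuts t i a b : valid t -> i < nleaves t -> allowable t i ->
  le_PT (lcut t i) a -> le_PT (rcut t i) b -> le_PT t (graft a b).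
Proof.
move=> hv hi ha h1 h2; apply: rt_trans (le_PT_graft_cuts hv hi ha) _.
exact: rt_trans (le_PT_graftl _ h1) (le_PT_graftr _ h2).
Qed.

(** * Rotations and splittings *)

Definition splits_below (t t' : ptree) (i : nat) : Prop :=
  [/\ allowable t i, le_PT (lcut t i) (lcut t' i) & le_PT (rcut t i) (rcut t' i)].

Lemma cat_cons_neq0 (T : Type) (l r : seq T) x : l ++ x :: r <> [::].
Proof. by case: l. Qed.

Lemma rcons_neq0 (T : Type) (l : seq T) x : rcons l x <> [::].
Proof. by case: l. Qed.

Lemma lrot_here_splits_below_cs l c r d1 ds j : ds <> [::] ->
  valid (Node (rcons (l ++ c :: r) (Node (d1 :: ds)))) -> j < nleaves c ->
  allowable (Node (Node (rcons (l ++ c :: r) d1) :: ds)) (nleavesF l + j) ->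
  splits_below (Node (rcons (l ++ c :: r) (Node (d1 :: ds))))
               (Node (Node (rcons (l ++ c :: r) d1) :: ds)) (nleavesF l + j).
Proof.
move=> hds hv hj.
have [_ _ /(_ hv) hv1] := lrot_spec (lrot_here d1 (@cat_cons_neq0 _ l r c) hds).
rewrite !rcons_cat !rcons_cons in hv hv1 *.
have hz : valid (Node (l ++ c :: rcons r d1)) by case/andP: hv1 => _ /andP[].
have hzi : nleavesF l + j < nleaves (Node (l ++ c :: rcons r d1)).
  by rewrite nleaves_Node nleavesF_cat nleavesF_cons; lia.
rewrite allowable_Node_cons // allowable_Node_cat //.
case/andP=> hac /orP[/eqP el|/eqP hr]; last by case: (rcons_neq0 hr).
subst l.
rewrite [nleavesF [::]]/= add0n !cat0s in hzi hz hv hv1 *.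
rewrite /splits_below !lcut_Node_cons // !rcut_Node_cons // allowable_Node_cons // hac.
split => //; first exact: rt_refl.
rewrite !contract_Node /= ?size_rcons //; last by case: ds hds {hv hv1}.
exact/rt_step/(@lrot_here (rcut c j :: r)).
Qed.

Lemma lrot_here_splits_below_d1 cs d1 ds j : cs <> [::] -> ds <> [::] ->
  valid (Node (rcons cs (Node (d1 :: ds)))) -> j < nleaves d1 ->
  allowable (Node (Node (rcons cs d1) :: ds)) (nleavesF cs + j) ->
  splits_below (Node (rcons cs (Node (d1 :: ds))))
               (Node (Node (rcons cs d1) :: ds)) (nleavesF cs + j).
Proof.
move=> hcs hds hv hj.
have [_ _ /(_ hv) hv1] := lrot_spec (lrot_here d1 hcs hds).
rewrite -!cats1 in hv hv1 *.
have /andP[_ /andP[hz _]] := hv1.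
have [_ hy _ _] := valid_Node_cat hv.
have hjy : j < nleaves (Node (d1 :: ds)) by rewrite nleaves_Node nleavesF_cons; lia.
have hzi : nleavesF cs + j < nleaves (Node (cs ++ [:: d1])).
  by rewrite nleaves_Node nleavesF_cat nleavesF_cons; lia.
rewrite allowable_Node_cons // allowable_Node_cat // => /andP[ha _].
rewrite /splits_below allowable_Node_cat // allowable_Node_cons // ha eqxx orbT.
rewrite lcut_Node_cat // lcut_Node_cons // lcut_Node_cons // lcut_Node_cat //.
rewrite rcut_Node_cat // rcut_Node_cons // rcut_Node_cons // rcut_Node_cat //.
by split=> //; exact: rt_refl.
Qed.

Lemma lrot_here_splits_below_ds cs d1 l c r j : cs <> [::] ->
  valid (Node (rcons cs (Node (d1 :: l ++ c :: r)))) -> j < nleaves c ->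
  allowable (Node (Node (rcons cs d1) :: l ++ c :: r))
            (nleavesF (Node (rcons cs d1) :: l) + j) ->
  splits_below (Node (rcons cs (Node (d1 :: l ++ c :: r))))
               (Node (Node (rcons cs d1) :: l ++ c :: r))
               (nleavesF (Node (rcons cs d1) :: l) + j).
Proof.
move=> hcs hv hj.
have [_ _ /(_ hv) hv1] := lrot_spec (lrot_here d1 hcs (@cat_cons_neq0 _ l r c)).
have hcs0 : 0 < size cs by case: cs hcs {hv hv1}.
set i := nleavesF _ + j.
have ei : i = nleavesF cs + (nleavesF (d1 :: l) + j).
  by rewrite /i !nleavesF_cons nleaves_Node nleavesF_rcons; lia.
have hv' : valid (Node (cs ++ [:: Node ((d1 :: l) ++ c :: r)])) by rewrite cats1.
have [_ hy _ _] := valid_Node_cat hv'.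
have hjy : nleavesF (d1 :: l) + j < nleaves (Node ((d1 :: l) ++ c :: r)).
  by rewrite nleaves_Node nleavesF_cat !nleavesF_cons; lia.
have At : allowable (Node (rcons cs (Node (d1 :: l ++ c :: r)))) i
           = allowable c j && (r == [::]).
  by rewrite ei -cats1 (allowable_Node_cat hv') ?allowable_Node_cat // eqxx orbT andbT.
have At1 : allowable (Node (Node (rcons cs d1) :: l ++ c :: r)) i
            = allowable c j && (r == [::]).
  exact: (@allowable_Node_cat (Node (rcons cs d1) :: l)).
rewrite At1 => ha; rewrite /splits_below At ha; split => //.
- rewrite {1}ei -cats1 lcut_Node_cat // (@lcut_Node_cat (d1 :: l)) //.
  rewrite (@lcut_Node_cat (Node (rcons cs d1) :: l)) // !contract_Node ?size_rcons //.
  by apply/rt_step/lrot_here => //; apply: rcons_neq0.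
- rewrite {1}ei -cats1 rcut_Node_cat // (@rcut_Node_cat (d1 :: l)) //.
  by rewrite (@rcut_Node_cat (Node (rcons cs d1) :: l)) //; exact: rt_refl.
Qed.

Lemma lrot_in_splits_below l r c c' i : lrot c c' ->
  (forall j, valid c -> j < nleaves c -> allowable c' j -> splits_below c c' j) ->
  valid (Node (l ++ c :: r)) -> i < nleaves (Node (l ++ c :: r)) ->
  allowable (Node (l ++ c' :: r)) i ->
  splits_below (Node (l ++ c :: r)) (Node (l ++ c' :: r)) i.
Proof.
move=> h IH hv hi; have [hn _ _] := lrot_spec h.
have [_ hc _ _] := valid_Node_cat hv.
have [_ _ /(_ hv) hv1] := lrot_spec (lrot_in l r h).
rewrite nleaves_Node nleavesF_cat nleavesF_cons in hi.
case: (ltnP i (nleavesF l)) => [hil|hli].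
  have [l1 [e [l2 [j [el -> hj]]]]] := nleavesF_split hil; subst l.
  rewrite -!catA !cat_cons in hv hv1 *.
  have sz x : 2 <= size (rcut e j :: l2 ++ x :: r) by rewrite /= size_cat /= addnS.
  have ne x : (l2 ++ x :: r == [::]) = false by case: (l2).
  rewrite /splits_below !allowable_Node_cat // !lcut_Node_cat // !rcut_Node_cat // !ne.
  rewrite !(contract_Node (sz _)) => ha; split => //; first exact: rt_refl.
  exact/(@le_PT_Node_cat (rcut e j :: l2))/rt_step.
case: (ltnP i (nleavesF l + nleaves c)) => [hic|hci].
  have [j ej] : exists j, i = nleavesF l + j by exists (i - nleavesF l); lia.
  have hj : j < nleaves c by lia.
  have hj' : j < nleaves c' by rewrite hn.
  subst i; rewrite /splits_below !allowable_Node_cat // => /andP[/(IH j hc hj)[a1 a2 a3] hb].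
  rewrite a1 hb !lcut_Node_cat // !rcut_Node_cat //.
  by split => //; [apply: le_PT_contract_rcons | apply: le_PT_contract_cons].
have [|r1 [e [r2 [j [er ei hj]]]]] := @nleavesF_split r (i - nleavesF l - nleaves c); first lia.
subst r; have E x : l ++ x :: r1 ++ e :: r2 = (l ++ x :: r1) ++ e :: r2 by rewrite -catA.
rewrite !E in hv hv1 *.
have ei1 : i = nleavesF (l ++ c :: r1) + j by rewrite nleavesF_cat nleavesF_cons; lia.
have ei2 : i = nleavesF (l ++ c' :: r1) + j by rewrite nleavesF_cat nleavesF_cons hn; lia.
have ne x : (l ++ x :: r1 == [::]) = false by case: (l).
rewrite /splits_below {1}ei2 allowable_Node_cat // ne => ha.
split.
- by rewrite ei1 allowable_Node_cat // ne.
- rewrite {1}ei1 ei2 !lcut_Node_cat // !contract_Node ?size_rcons ?size_cat //= ?addnS //.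
  by rewrite !rcons_cat !rcons_cons; apply/le_PT_Node_cat/rt_step.
- by rewrite {1}ei1 ei2 !rcut_Node_cat //; exact: rt_refl.
Qed.

Lemma lrot_splits_below t t' i : lrot t t' -> valid t -> i < nleaves t ->
  allowable t' i -> splits_below t t' i.
Proof.
move=> h; elim: h i => {t t'} [cs d1 ds hcs hds | l r c c' h IH] i hv hi; last first.
  exact: (lrot_in_splits_below h IH).
rewrite nleaves_Node nleavesF_rcons nleaves_Node nleavesF_cons in hi.
case: (ltnP i (nleavesF cs)) => [hics|hcsi].
  have [l [c [r [j [ecs -> hj]]]]] := nleavesF_split hics; subst cs.
  exact: lrot_here_splits_below_cs.
case: (ltnP i (nleavesF cs + nleaves d1)) => [hid1|hd1i].
  have [j ej] : exists j, i = nleavesF cs + j by exists (i - nleavesF cs); lia.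
  by subst i; apply: lrot_here_splits_below_d1 => //; lia.
have [|l [c [r [j [eds ei hj]]]]] := @nleavesF_split ds (i - nleavesF cs - nleaves d1); first lia.
subst ds; have -> : i = nleavesF (Node (rcons cs d1) :: l) + j.
  by rewrite nleavesF_cons nleaves_Node nleavesF_rcons; lia.
exact: lrot_here_splits_below_ds.
Qed.

Lemma le_PT_graft_splits t a b : valid t -> valid a -> valid b ->
  le_PT t (graft a b) ->
  [/\ allowable t (deg a), le_PT (lcut t (deg a)) a & le_PT (rcut t (deg a)) b].
Proof.
move=> hv ha hb /clos_rt_rt1n_iff h; remember (graft a b) as g eqn:eg.
have [_ na da] := graft_spec ha hb; have [ca cb] := cuts_graft ha hb.
elim: h eg hv => {t} [x ->|x y z hxy hyz IH eg] hv.
  by rewrite /allowable ca cb da eqxx; split=> //; apply: rt_refl.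
have [hn _ /(_ hv) hvy] := lrot_spec hxy.
have [a1 a2 a3] := IH eg hvy.
have hi : deg a < nleaves x.
  have [hz _ _] := le_PT_spec (clos_rt1n_rt _ _ _ _ hyz).
  by rewrite -hn -hz eg na /deg; have := nleaves_gt0 ha; have := nleaves_gt0 hb; lia.
have [c1 c2 c3] := lrot_splits_below hxy hv hi a1.
by split=> //; [exact: rt_trans c2 a2 | exact: rt_trans c3 a3].
Qed.

(** * A potential for the Tamari order *)

(* [pot t] counts the pairs (leaf, internal node) of [t] such that the leaf
   lies to the left of the subtree of the node ([weight] is [nleaves], except
   that it never vanishes).  A left rotation at [x] deletes the pairs formed by
   [y] and the leaves of [c_1, ..., c_(a-1)]. *)
Fixpoint weight (t : ptree) : nat :=
  match t with Leaf => 1 | Node cs => sumn (map weight cs) + (size cs == 0) end.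

Definition weightF (l : seq ptree) := sumn (map weight l).

Fixpoint cross (cs : seq ptree) : nat :=
  if cs is c :: cs' then weight c * idegF cs' + cross cs' else 0.

Fixpoint pot (t : ptree) : nat :=
  match t with Leaf => 0 | Node cs => sumn (map pot cs) + cross cs end.

Definition potF (l : seq ptree) := sumn (map pot l).

Lemma pot_Node cs : pot (Node cs) = potF cs + cross cs. Proof. by []. Qed.

Lemma weight_Node cs : cs != [::] -> weight (Node cs) = weightF cs.
Proof. by case: cs => //= c cs _; rewrite addn0. Qed.

Lemma weightF_cons c l : weightF (c :: l) = weight c + weightF l. Proof. by []. Qed.
Lemma potF_cons c l : potF (c :: l) = pot c + potF l. Proof. by []. Qed.
Lemma weightF_cat l r : weightF (l ++ r) = weightF l + weightF r.
Proof. by rewrite /weightF map_cat sumn_cat. Qed.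
Lemma potF_cat l r : potF (l ++ r) = potF l + potF r.
Proof. by rewrite /potF map_cat sumn_cat. Qed.
Lemma weightF_rcons l c : weightF (rcons l c) = weightF l + weight c.
Proof. by rewrite -cats1 weightF_cat /weightF /= addn0. Qed.
Lemma potF_rcons l c : potF (rcons l c) = potF l + pot c.
Proof. by rewrite -cats1 potF_cat /potF /= addn0. Qed.

Lemma cross_cons c r : cross (c :: r) = weight c * idegF r + cross r.
Proof. by []. Qed.

Lemma cross_cat l r : cross (l ++ r) = cross l + cross r + weightF l * idegF r.
Proof.
elim: l => [|c l IH] /=; first by rewrite mul0n addn0.
by rewrite IH idegF_cat weightF_cons; nia.
Qed.

Lemma cross_rcons l c : cross (rcons l c) = cross l + weightF l * ideg c.
Proof. by rewrite -cats1 cross_cat /= /idegF /= !addn0 muln0 addn0. Qed.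

Lemma weight_gt0 t : 0 < weight t.
Proof.
by elim/ptree_ind_mem: t => // [[|c cs]] IH //=; have := IH c (mem_head _ _); lia.
Qed.

Lemma weightF_gt0 l : l != [::] -> 0 < weightF l.
Proof. by case: l => //= c l _; rewrite weightF_cons; have := weight_gt0 c; lia. Qed.

Lemma lrot_pot s t : lrot s t -> weight t = weight s /\ pot t < pot s.
Proof.
elim=> {s t} [cs d1 ds hcs hds | l r c c' h [hw hp]].
- have hw := weightF_gt0 (introN eqP hcs).
  have e1 : weight (Node (rcons cs d1)) = weightF cs + weight d1.
    by rewrite weight_Node -?size_eq0 ?size_rcons // weightF_rcons.
  have e2 : weight (Node (d1 :: ds)) = weight d1 + weightF ds by rewrite weight_Node.
  rewrite !weight_Node -?size_eq0 ?size_rcons // weightF_cons weightF_rcons e1 e2.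
  split; first lia.
  rewrite !pot_Node potF_cons potF_rcons !pot_Node cross_cons cross_rcons e1.
  by rewrite potF_rcons cross_rcons potF_cons cross_cons ideg_Node idegF_cons; nia.
- have [_ hd _] := lrot_spec h.
  have ne x : l ++ x :: r != [::] by case: (l).
  rewrite !weight_Node // !weightF_cat !weightF_cons hw; split => //.
  by rewrite !pot_Node !potF_cat !potF_cons !cross_cat !cross_cons !idegF_cons hd hw; nia.
Qed.

Lemma le_PT_pot_le s t : le_PT s t -> pot t <= pot s.
Proof.
by elim=> {s t} [s t /lrot_pot[_ /ltnW] | s | s t u _ h1 _ h2] //; apply: leq_trans h1.
Qed.

Lemma le_PT_pot s t : le_PT s t -> t != s -> pot t < pot s.
Proof.
move=> /clos_rt_rt1n_iff [|y z /lrot_pot[_ hsy] hyz _]; first by rewrite eqxx.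
exact: leq_ltn_trans (le_PT_pot_le (clos_rt1n_rt _ _ _ _ hyz)) hsy.
Qed.

(** * Enumeration of planar trees *)

(* The forest enumeration inside [treesF]. *)
Definition forests_of (tr : nat -> seq ptree) : nat -> nat -> seq (seq ptree) :=
  fix forests (g m : nat) {struct g} : seq (seq ptree) :=
  match g with
  | 0 => if m == 0 then [:: [::]] else [::]
  | g'.+1 =>
    if m == 0 then [:: [::]] else
    flatten [seq [seq t :: fo | t <- tr k, fo <- forests g' (m - k)]
            | k <- iota 1 m]
  end.

Lemma forests_of_0 tr m : forests_of tr 0 m = if m == 0 then [:: [::]] else [::].
Proof. by []. Qed.

Lemma forests_of_S tr g m : forests_of tr g.+1 m =
  if m == 0 then [:: [::]] else
  flatten [seq [seq t :: fo | t <- tr k, fo <- forests_of tr g (m - k)]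
          | k <- iota 1 m].
Proof. by []. Qed.

Lemma treesF_S f n : treesF f.+1 n =
  if n == 1 then [:: Leaf]
  else [seq Node fo | fo <- forests_of (treesF f) n n & 2 <= size fo].
Proof. by []. Qed.

Lemma mem_forests_of tr g m fo :
  (forall k t, t \in tr k -> valid t /\ nleaves t = k) ->
  fo \in forests_of tr g m -> all valid fo /\ nleavesF fo = m.
Proof.
move=> htr; elim: g m fo => [|g IH] m fo; rewrite ?forests_of_0 ?forests_of_S.
  by case: (m =P 0) => [->|//]; rewrite inE => /eqP->.
case: (m =P 0) => [->|_]; first by rewrite inE => /eqP->.
case/flattenP=> L /mapP[k]; rewrite mem_iota => hk ->.
case/allpairsP=> [[t fo'] [/= /htr[vt nt] /IH[vfo nfo] ->]].
by rewrite /= vt vfo nleavesF_cons nt nfo; split=> //; lia.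
Qed.

Lemma mem_treesF f n t : t \in treesF f n -> valid t /\ nleaves t = n.
Proof.
elim: f n t => [//|f IH] n t; rewrite treesF_S.
case: (n =P 1) => [->|_]; first by rewrite inE => /eqP->.
case/mapP=> fo; rewrite mem_filter => /andP[hs /mem_forests_of hfo] ->.
by have [vfo <-] := hfo IH; rewrite valid_Node hs vfo.
Qed.

Lemma forests_of_complete tr g fo :
  size fo <= g -> (forall c, c \in fo -> 0 < nleaves c /\ c \in tr (nleaves c)) ->
  fo \in forests_of tr g (nleavesF fo).
Proof.
elim: g fo => [|g IH] [|c fo] //= hs hin; rewrite ?eqxx ?mem_head //.
have [hc1 hc2] := hin c (mem_head _ _).
rewrite nleavesF_cons; case: eqP => [|_]; first lia.
apply/flattenP; exists [seq t :: fo0 | t <- tr (nleaves c),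
                        fo0 <- forests_of tr g (nleaves c + nleavesF fo - nleaves c)].
  by apply/mapP; exists (nleaves c); rewrite // mem_iota; lia.
apply/allpairsP; exists (c, fo); split => //=.
rewrite addKn; apply: IH => // x hx.
by apply: hin; rewrite inE hx orbT.
Qed.

Lemma nleaves_child_le c cs : c \in cs -> all valid cs ->
  nleaves c + (size cs).-1 <= nleavesF cs.
Proof.
elim: cs => [//|x cs IH]; rewrite inE nleavesF_cons => /orP[/eqP->|hc] /andP[hx hcs].
  by have := size_le_nleavesF hcs; rewrite /=; lia.
have := IH hc hcs; have := nleaves_gt0 hx.
by case: cs hc {IH hcs} => // y cs' _ /=; lia.
Qed.

Lemma treesF_complete f t : valid t -> nleaves t <= f -> t \in treesF f (nleaves t).
Proof.
elim: f t => [|f IH] t hv hn; first by have := nleaves_gt0 hv; lia.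
rewrite treesF_S; case: t hv hn => [|cs] hv hn; first by rewrite eqxx inE.
move: (hv); rewrite valid_Node => /andP[hs hcs].
have := size_le_nleavesF hcs; rewrite nleaves_Node in hn * => hW.
case: eqP => [|_]; first lia.
apply/mapP; exists cs => //; rewrite mem_filter hs /=.
apply: forests_of_complete => // c hc; have hcv := allP hcs c hc.
split; first exact: nleaves_gt0.
apply: IH => //; have := nleaves_child_le hc hcs.
by case: (size cs) hs => [|k] /=; lia.
Qed.

Lemma trees_complete t : valid t -> t \in trees (nleaves t).
Proof. by move=> hv; apply: treesF_complete. Qed.

Lemma mem_trees n t : t \in trees n -> valid t /\ nleaves t = n.
Proof. exact: mem_treesF. Qed.

Lemma uniq_flatten_map (T : eqType) (f : nat -> seq T) s :
  uniq s -> (forall k, uniq (f k)) ->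
  (forall k k' x, x \in f k -> x \in f k' -> k = k') -> uniq (flatten (map f s)).
Proof.
move=> us uf hd; elim: s us => [//|k s IH] /= /andP[hk us].
rewrite cat_uniq uf IH // andbT /=.
apply/hasP => [[x /flattenP[_ /mapP[k' hk' ->] hx] hx']].
by move: hk; rewrite (hd _ _ _ hx' hx) hk'.
Qed.

Lemma forests_of_uniq tr g m :
  (forall k, uniq (tr k)) -> (forall k t, t \in tr k -> nleaves t = k) ->
  uniq (forests_of tr g m).
Proof.
move=> hu hs; elim: g m => [|g IH] m /=; first by case: (m == 0).
case: (m == 0) => //; apply: uniq_flatten_map; first exact: iota_uniq.
- by move=> k; apply: allpairs_uniq => // [[a b] [c d]] _ _ /= [-> ->].
- move=> k k' x /allpairsP[[a b] [/= ha _ ->]] /allpairsP[[c d] [/= hc _ [e1 _]]].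
  by rewrite -(hs _ _ ha) -(hs _ _ hc) e1.
Qed.

Lemma treesF_uniq f n : uniq (treesF f n).
Proof.
elim: f n => [//|f IH] n; rewrite treesF_S.
case: (n == 1) => //; rewrite map_inj_uniq; last by move=> x y [].
by apply/filter_uniq/forests_of_uniq => // k t /mem_treesF[].
Qed.

Lemma trees_uniq n : uniq (trees n). Proof. exact: treesF_uniq. Qed.

(** * The monomial basis *)

Lemma pboolP (P : Prop) : reflect P (pbool P).
Proof. by rewrite /pbool; case: excluded_middle_informative => h; constructor. Qed.

Lemma sub_count_lt (T : eqType) (P Q : pred T) (l : seq T) x :
  subpred P Q -> x \in l -> Q x -> ~~ P x -> count P l < count Q l.
Proof.
move=> hPQ; elim: l => [//|y l IH]; rewrite inE => /orP[/eqP<- hQ hP|hx hQ hP] /=.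
  by rewrite (negbTE hP) hQ add0n add1n ltnS sub_count.
have hy : P y <= Q y by case: (P y) (hPQ y) => // /(_ isT) ->.
by have := IH hx hQ hP; lia.
Qed.

Lemma mem_upset_strict s t : t \in upset_strict s ->
  [/\ le_PT s t, t != s, nleaves t = nleaves s & t \in trees (nleaves s)].
Proof.
rewrite mem_filter => /andP[/andP[/pboolP hle hne] ht]; split => //.
by have [] := mem_trees ht.
Qed.

Lemma upset_strict_ind (P : ptree -> Prop) :
  (forall t, valid t -> (forall t', t' \in upset_strict t -> P t') -> P t) ->
  forall t, valid t -> P t.
Proof.
move=> hP t; elim: {t}(pot t) {-2}t (leqnn (pot t)) => [|n IH] t hn hv.
all: apply: hP => // t' /mem_upset_strict[hle hne _ _].
all: have := le_PT_pot hle hne; have [_ _ /(_ hv)] := le_PT_spec hle.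
- lia.
- by move=> ht' hlt; apply: IH => //; lia.
Qed.

(* Above this bound the fuel of [Mrec] no longer matters. *)
Definition fuel_bound (s : ptree) : nat :=
  (count (fun y => pot y < pot s) (trees (nleaves s))).+1.

Lemma fuel_bound_lt s t : t \in upset_strict s -> fuel_bound t < fuel_bound s.
Proof.
case/mem_upset_strict=> hle hne hn ht; have hlt := le_PT_pot hle hne.
by rewrite /fuel_bound hn ltnS; apply: sub_count_lt ht _ _ => //= [x|]; [lia|rewrite ltnn].
Qed.

Lemma Mrec_fuel (K : fieldType) s f f' :
  fuel_bound s <= f -> fuel_bound s <= f' -> Mrec K f s = Mrec K f' s.
Proof.
elim: f f' s => [|f IH] [|f'] s //= hf hf'; congr (_ :: map _ (flatten _)).
by apply/eq_in_map => t /fuel_bound_lt ht; apply: IH; lia.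
Qed.

Section Coefficients.
Variable K : fieldType.
Local Open Scope ring_scope.

Lemma M_rec s : M K s =
  (1, s) :: [seq (- p.1, p.2) | p <- flatten [seq M K t | t <- upset_strict s]].
Proof.
rewrite {1}/M /=; congr (_ :: map _ (flatten _)); apply/eq_in_map => t ht.
have hlt := fuel_bound_lt ht; have [_ _ hn _] := mem_upset_strict ht.
have : (fuel_bound s <= (size (trees (nleaves s))).+1)%N by rewrite ltnS count_size.
by rewrite /M hn => hs; apply: Mrec_fuel; lia.
Qed.

Definition elt_eval (x : elt K) (h : ptree -> K) : K := \sum_(p <- x) p.1 * h p.2.

Lemma elt_eval_M s h :
  elt_eval (M K s) h = h s - \sum_(t <- upset_strict s) elt_eval (M K t) h.
Proof.
rewrite M_rec /elt_eval big_cons mul1r big_map big_flatten /= big_map -sumrN.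
by congr (_ + _); apply: eq_bigr => t _; rewrite -sumrN; apply: eq_bigr => p _; rewrite mulNr.
Qed.

Lemma coef_eval (x : elt K) u : coef x u = elt_eval x (fun s => (s == u)%:R).
Proof. by apply: eq_bigr => p _; rewrite mulrC. Qed.

Lemma coef2_flatten (L : seq (elt2 K)) u : coef2 (flatten L) u = \sum_(x <- L) coef2 x u.
Proof. by rewrite /coef2 big_flatten. Qed.

Lemma coef2_Delta (x : elt K) u : coef2 (Delta x) u = elt_eval x (fun s => coef2 (DeltaF K s) u).
Proof.
rewrite /Delta coef2_flatten big_map /elt_eval; apply: eq_bigr => p _.
by rewrite /coef2 big_map mulr_sumr; apply: eq_bigr => q _ /=; rewrite mulrCA.
Qed.

Lemma coef2_tens (x y : elt K) u : coef2 (tens x y) u = coef x u.1 * coef y u.2.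
Proof.
rewrite /tens /coef2 /coef big_flatten big_map mulr_suml; apply: eq_bigr => p _.
rewrite big_map mulr_sumr; apply: eq_bigr => q _.
by case: u => u1 u2; rewrite xpair_eqE -mulnb natrM mulrACA.
Qed.

Lemma coef2_DeltaF s u : coef2 (DeltaF K s) u =
  \sum_(i <- iota 0 (deg s).+1 | allowable s i) (lcut s i == u.1)%:R * (rcut s i == u.2)%:R.
Proof.
rewrite /coef2 /DeltaF big_map big_filter; apply: eq_bigr => i _.
by case: u => u1 u2; rewrite xpair_eqE -mulnb natrM mulr1.
Qed.

Definition upset (s : ptree) : seq ptree := s :: upset_strict s.

(* [F_s = \sum_(t >= s) M_t], read on the coefficient of [F_v]. *)
Lemma sum_upset_coef_M s v : (s == v)%:R = \sum_(a <- upset s) coef (M K a) v.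
Proof.
rewrite big_cons !coef_eval elt_eval_M.
by under [in RHS]eq_bigr do rewrite coef_eval; rewrite subrK.
Qed.

End Coefficients.

(** * Coproduct of the monomial basis *)

Definition graft_at (t : ptree) (i : nat) : bool :=
  pbool (exists s r, [/\ valid s, valid r, t = graft s r & deg s = i]).

Lemma mem_upsetP s t : valid s -> reflect (le_PT s t) (t \in upset s).
Proof.
move=> hv; apply: (iffP idP) => [|hle].
  by rewrite inE => /orP[/eqP->|/mem_upset_strict[]//]; apply: rt_refl.
have [hn _ /(_ hv) ht] := le_PT_spec hle.
rewrite inE mem_filter -hn trees_complete // andbT.
by case: (t =P s) => //= _; apply/andP; split; [apply/pboolP | apply/eqP].
Qed.

Lemma upset_uniq s : uniq (upset s).
Proof. by rewrite /= filter_uniq ?trees_uniq // mem_filter eqxx andbF. Qed.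

Lemma graft_at_upset_allowable t t' i : valid t -> t' \in upset t -> graft_at t' i ->
  allowable t i.
Proof.
move=> hv /(mem_upsetP _ hv) hle /pboolP[s [r [hs hr ets <-]]]; subst t'.
by have [] := le_PT_graft_splits hv hs hr hle.
Qed.

(* The inverse of [t' |-> (lcut t' i, rcut t' i)] is [(a, b) |-> graft a b]. *)
Lemma perm_cuts_upset t i : valid t -> i < nleaves t -> allowable t i ->
  perm_eq [seq (lcut t' i, rcut t' i) | t' <- upset t & graft_at t' i]
          [seq (a, b) | a <- upset (lcut t i), b <- upset (rcut t i)].
Proof.
move=> hv hi ha; have [vl nl vr nr _] := cuts_spec hv hi.
apply: uniq_perm.
- rewrite map_inj_in_uniq ?filter_uniq ?upset_uniq // => x y.
  rewrite !mem_filter => /andP[/pboolP[s1 [r1 [hs1 hr1 -> <-]]] _].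
  move=> /andP[/pboolP[s2 [r2 [hs2 hr2 -> e2]]] _].
  have [-> ->] := cuts_graft hs1 hr1; rewrite -e2.
  by have [-> ->] := cuts_graft hs2 hr2; move=> [-> ->].
- apply: allpairs_uniq; try exact: upset_uniq.
  by move=> [a b] [c d] _ _ /= [-> ->].
move=> [a b]; apply/mapP/allpairsP => [[t']|[[a' b'] [ha' hb' [-> ->]]]].
  rewrite mem_filter => /andP[/pboolP[s [r [hs hr ets hd]]] ht'] [-> ->].
  subst t' i.
  have [_ hls hrs] := le_PT_graft_splits hv hs hr (elimT (mem_upsetP _ hv) ht').
  have [-> ->] := cuts_graft hs hr.
  by exists (s, r); split => //; apply/mem_upsetP.
rewrite /= in ha' hb'; move/(mem_upsetP _ vl): ha' => ha'; move/(mem_upsetP _ vr): hb' => hb'.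
have [n1 _ /(_ vl) va] := le_PT_spec ha'; have [_ _ /(_ vr) vb] := le_PT_spec hb'.
have hd : deg a' = i by rewrite /deg n1 nl.
exists (graft a' b'); last by rewrite -hd; have [-> ->] := cuts_graft va vb.
rewrite mem_filter; apply/andP; split; first by apply/pboolP; exists a', b'.
exact/(mem_upsetP _ hv)/(le_PT_graft_of_cuts hv hi ha ha' hb').
Qed.

Local Open Scope ring_scope.

Lemma sum_upset_graft_at (V : nmodType) (G : ptree -> ptree -> V) t i :
  valid t -> (i < nleaves t)%N ->
  \sum_(t' <- upset t | graft_at t' i) G (lcut t' i) (rcut t' i) =
  if allowable t i then \sum_(a <- upset (lcut t i)) \sum_(b <- upset (rcut t i)) G a b
  else 0.
Proof.
move=> hv hi; case ha: (allowable t i); last first.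
  apply: big1_seq => t' /andP[hg ht'].
  by move: ha; rewrite (graft_at_upset_allowable hv ht' hg).
rewrite -big_filter -(big_map (fun t' => (lcut t' i, rcut t' i)) predT (fun p => G p.1 p.2)).
by rewrite (perm_big _ (perm_cuts_upset hv hi ha)) big_allpairs.
Qed.

Section Coproduct.
Variable K : fieldType.

Definition graft_sum (t : ptree) (u : ptree * ptree) : K :=
  \sum_(i <- iota 0 (nleaves t) | graft_at t i)
     coef (M K (lcut t i)) u.1 * coef (M K (rcut t i)) u.2.

Lemma coef2_Delta_M t u : valid t -> coef2 (Delta (M K t)) u = graft_sum t u.
Proof.
move: t; apply: upset_strict_ind => t hv IH.
pose G (a b : ptree) := coef (M K a) u.1 * coef (M K b) u.2.
pose Gi t' := \sum_(i <- iota 0 (nleaves t) | graft_at t' i) G (lcut t' i) (rcut t' i).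
have hsum : \sum_(t' <- upset t) Gi t' = coef2 (DeltaF K t) u.
  rewrite (exchange_big_dep predT) //= coef2_DeltaF [RHS]big_mkcond.
  have -> : (deg t).+1 = nleaves t by rewrite /deg; have := nleaves_gt0 hv; lia.
  apply: eq_big_seq => i; rewrite mem_iota add0n => hi.
  rewrite sum_upset_graft_at //; case: (allowable t i) => //.
  rewrite !sum_upset_coef_M mulr_suml; apply: eq_bigr => a _.
  by rewrite mulr_sumr.
have hstrict : \sum_(t' <- upset_strict t) elt_eval (M K t') (fun s => coef2 (DeltaF K s) u)
               = \sum_(t' <- upset_strict t) Gi t'.
  apply: eq_big_seq => t' ht'; rewrite -coef2_Delta IH //.
  by have [_ _ hn _] := mem_upset_strict ht'; rewrite /graft_sum hn.
by rewrite coef2_Delta elt_eval_M -hsum big_cons hstrict addrK.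
Qed.

End Coproduct.

Local Open Scope ring_scope.

Lemma coef_M_Leaf (K : fieldType) v : coef (M K Leaf) v = (Leaf == v)%:R.
Proof.
have hLeaf : upset_strict Leaf = [::] by rewrite /upset_strict [trees _]/= /= andbF.
by rewrite (sum_upset_coef_M K) /upset hLeaf big_seq1.
Qed.

Lemma graft_at_GD t i : (1 <= i <= (deg t).-1)%N -> graft_at t i = pbool (GD t i).
Proof. by move=> hi; apply/pboolP/pboolP => [|[]//]; split. Qed.

Theorem mainTheorem18 (K : fieldType) (t : ptree) :
  valid t -> (0 < deg t)%N ->
  forall u : ptree * ptree,
    coefDeltaPlus (M K t) u =
    coef2 (flatten [seq tens (M K (lcut t i)) (M K (rcut t i))
                   | i <- iota 1 (deg t).-1 & pbool (GD t i)]) u.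
Proof.
move=> hv hd u.
have hiota : iota 0 (nleaves t) = 0%N :: rcons (iota 1 (deg t).-1) (deg t).
  have -> : nleaves t = (deg t).+1 by rewrite /deg prednK // nleaves_gt0.
  by case: (deg t) hd => [//|d] _; rewrite -addn1 iotaD /= cats1.
have [l0 r0] := cuts_graft (isT : valid Leaf) hv; rewrite graft_Leaf_l in l0 r0.
have [ld rd] := cuts_deg hv.
have g0 : graft_at t 0 by apply/pboolP; exists Leaf, t; rewrite graft_Leaf_l.
have gd : graft_at t (deg t) by apply/pboolP; exists t, Leaf.
rewrite /coefDeltaPlus coef2_Delta_M // /graft_sum hiota big_cons big_rcons g0 gd.
rewrite l0 r0 ld rd !coef_M_Leaf coef2_flatten big_map big_filter.
have -> : \sum_(i <- iota 1 (deg t).-1 | graft_at t i)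
             coef (M K (lcut t i)) u.1 * coef (M K (rcut t i)) u.2
        = \sum_(i <- iota 1 (deg t).-1 | pbool (GD t i))
             coef2 (tens (M K (lcut t i)) (M K (rcut t i))) u.
  rewrite big_seq_cond [RHS]big_seq_cond.
  apply: eq_big => [i|i _]; last by rewrite coef2_tens.
  rewrite mem_iota; case hi: (1 <= i < 1 + (deg t).-1)%N => //=.
  by rewrite graft_at_GD //; lia.
by rewrite !(eq_sym Leaf) addrA addrK [X in X - _ = _]addrC addrK.
Qed.
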